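(* (1) Let $M=2N-1$ and let $\mathcal F=\{f_1,\dots,f_M\}$ be a frame for $\mathbb R^N$. If $\mathbb M^{\mathcal F}$ is injective, then every $N$-element subset of $\mathcal F$ is linearly independent. (2) Let $N\ge 2$ and $M\ge 2N$. Then there exists an $M$-element frame $\mathcal F$ for $\mathbb R^N$ such that $\mathbb M^{\mathcal F}$ is injective but some $N$-element subset of $\mathcal F$ is linearly dependent.
   Context: A frame for $\mathbb R^N$ is a spanning family $\{f_1,\dots,f_M\}$ (indexed, repetitions allowed). $\mathbb M^{\mathcal F}:\mathbb R^N/\{\pm1\}\to\mathbb R^M$, $\hat x\mapsto(|\langle x,f_k\rangle|)_k$; injectivity means $|\langle x,f_k\rangle|=|\langle y,f_k\rangle|$ for all $k$ implies $y=\pm x$. *)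

From HB Require Import structures.
From mathcomp Require Import all_boot all_order all_algebra.
From mathcomp Require Import reals.
Set Implicit Arguments. Unset Strict Implicit. Unset Printing Implicit Defensive.
Import Order.TTheory GRing.Theory Num.Theory.
Local Open Scope ring_scope.

Definition dotv (R : realType) (N : nat) (x y : 'rV[R]_N) : R :=
  \sum_(i < N) x 0 i * y 0 i.

(* An indexed family F : 'I_M -> R^N (repetitions allowed) is a frame
   iff it spans R^N. *)
Definition is_frame (R : realType) (N M : nat) (F : 'I_M -> 'rV[R]_N) : Prop :=
  (\sum_(k < M) <<F k>> == 1%:M)%MS.

(* Injectivity of the phaseless map  x mod ±1 |-> (|<x, f_k>|)_k. *)
Definition phaseless_injective (R : realType) (N M : nat)
  (F : 'I_M -> 'rV[R]_N) : Prop :=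
  forall x y : 'rV[R]_N,
    (forall k : 'I_M, `|dotv x (F k)| = `|dotv y (F k)|) ->
    y = x \/ y = - x.

Definition lin_indep_on (R : realType) (N M : nat)
  (F : 'I_M -> 'rV[R]_N) (S : {set 'I_M}) : Prop :=
  forall c : 'I_M -> R, \sum_(i in S) c i *: F i = 0 ->
    forall i, i \in S -> c i = 0.

From HB Require Import structures.
From mathcomp Require Import all_boot all_order all_algebra.
From mathcomp Require Import reals.
From mathcomp Require Import lra zify.
Set Implicit Arguments. Unset Strict Implicit. Unset Printing Implicit Defensive.
Import Order.TTheory GRing.Theory Num.Theory.
Local Open Scope ring_scope.

(* Phaseless injectivity is equivalent to the complement property: for every
   partition S, ~: S of the indices, one of the two subfamilies leaves no
   nonzero vector orthogonal to it.  Indeed, if u is orthogonal to F_S and v to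
   F_(~: S), then u + v and u - v have the same moduli of coefficients, and
   conversely two vectors with the same moduli agree (up to sign) on one side.
   (1) If M = 2N - 1 and some N-subset S were dependent, both S and its
   complement (of size N - 1) would have rank < N.  (2) For M >= 2N take the
   Vandermonde vectors (t^j)_j at the nodes 0, 0, 1, 2, ..., M - 2: the repeated
   node gives a dependent N-subset, but after dropping one copy, one side of
   any partition still has N distinct nodes, and a nonzero polynomial of degree
   < N cannot vanish at all of them. *)

Section Frames.
Variables (R : realType) (N M : nat).
Implicit Types (F : 'I_M -> 'rV[R]_N) (S T : {set 'I_M}) (u v x y : 'rV[R]_N).

Definition orthogonal_on F T u := forall k, k \in T -> dotv u (F k) = 0.

Definition subfamx F T : 'M[R]_(#|T|, N) := \matrix_(i < #|T|) F (enum_val i).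

Lemma dotvDl x y v : dotv (x + y) v = dotv x v + dotv y v.
Proof. by rewrite /dotv -big_split; apply: eq_bigr => i _; rewrite mxE mulrDl. Qed.

Lemma dotvNl x v : dotv (- x) v = - dotv x v.
Proof. by rewrite /dotv -sumrN; apply: eq_bigr => i _; rewrite mxE mulNr. Qed.

Lemma subfamx_orthogonal F T :
  (\rank (subfamx F T) < N)%N -> exists2 u, u != 0 & orthogonal_on F T u.
Proof.
move=> rkT; set A := subfamx F T.
have kerA : kermx A^T != 0 by rewrite kermx_eq0 /row_free mxrank_tr neq_ltn rkT.
exists (nz_row (kermx A^T)); first by rewrite nz_row_eq0.
move=> k kT; have /sub_kermxP/rowP/(_ (enum_rank_in kT k)) := nz_row_sub (kermx A^T).
by rewrite !mxE => <-; apply: eq_bigr => j _; rewrite !mxE enum_rankK_in.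
Qed.

Lemma subfamx_row_free_lin_indep F S : row_free (subfamx F S) -> lin_indep_on F S.
Proof.
move=> freeS c sum0 i iS.
set w := \row_(l < #|S|) c (enum_val l).
have /eqP : w *m subfamx F S = 0.
  rewrite mulmx_sum_row -[RHS]sum0 (big_enum_val (fun k => c k *: F k)) /=.
  by apply: eq_bigr => l _; rewrite rowK mxE.
rewrite mulmx_free_eq0 // => /eqP/rowP/(_ (enum_rank_in iS i)).
by rewrite !mxE enum_rankK_in.
Qed.

Lemma orthogonal_eq0_is_frame F :
  (forall u, orthogonal_on F [set: 'I_M] u -> u = 0) -> is_frame F.
Proof.
move=> orth_eq0; set A := subfamx F [set: 'I_M].
have fullA : row_full A.
  apply/negPn/negP => notfull.
  have [|u u_neq0 /orth_eq0 u_eq0] := subfamx_orthogonal (F := F) (T := [set: 'I_M]).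
    by rewrite ltn_neqAle notfull rank_leq_col.
  by rewrite u_eq0 eqxx in u_neq0.
apply/andP; split; first exact: submx1.
apply: submx_trans (_ : (A <= _)%MS); first by rewrite sub1mx.
by apply/row_subP => i; rewrite rowK (sumsmx_sup (enum_val i)) ?genmxE.
Qed.

Lemma repeated_not_lin_indep F S i j :
  i != j -> i \in S -> j \in S -> F i = F j -> ~ lin_indep_on F S.
Proof.
move=> neq_ij iS jS Fij /(_ (fun k => (k == i)%:R - (k == j)%:R)) indep.
have ji : (j == i) = false by rewrite eq_sym (negbTE neq_ij).
suff sum0 : \sum_(k in S) ((k == i)%:R - (k == j)%:R) *: F k = 0.
  by move/eqP: (indep sum0 i iS); rewrite eqxx (negbTE neq_ij) subr0 oner_eq0.
rewrite (bigD1 i) // (bigD1 j) /=; last by rewrite jS ji.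
rewrite big1 => [|k /andP[/andP[_ /negbTE ->] /negbTE ->]]; last by rewrite subrr scale0r.
by rewrite !eqxx (negbTE neq_ij) ji Fij addr0 subr0 sub0r scaleNr scale1r addrN.
Qed.

Lemma phaseless_injective_complement F S u v : phaseless_injective F ->
  orthogonal_on F S u -> orthogonal_on F (~: S) v -> u = 0 \/ v = 0.
Proof.
move=> inj orth_u orth_v.
have opp_fixed_eq0 x : - x = x -> x = 0.
  by move=> /rowP opp_x; apply/rowP => j; have := opp_x j; rewrite !mxE; lra.
have same_moduli k : `|dotv (u + v) (F k)| = `|dotv (u - v) (F k)|.
  have [kS | kC] := boolP (k \in S).
    by rewrite !dotvDl dotvNl orth_u // !add0r normrN.
  by rewrite !dotvDl dotvNl (orth_v k) ?inE ?kC // oppr0 !addr0.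
case: (inj _ _ same_moduli) => [/addrI/opp_fixed_eq0 | ]; first by right.
by rewrite opprD => /addIr/esym/opp_fixed_eq0; left.
Qed.

Lemma complement_phaseless_injective F :
  (forall S, (forall u, orthogonal_on F S u -> u = 0) \/
             (forall u, orthogonal_on F (~: S) u -> u = 0)) ->
  phaseless_injective F.
Proof.
move=> split_eq0 x y same_moduli.
set S := [set k | dotv x (F k) == dotv y (F k)].
have orthS : orthogonal_on F S (x - y).
  by move=> k; rewrite inE dotvDl dotvNl => /eqP ->; rewrite subrr.
have orthC : orthogonal_on F (~: S) (x + y).
  move=> k; rewrite !inE dotvDl => neq_k.
  move/eqP: (same_moduli k); rewrite eqr_norm2 (negbTE neq_k) /= => /eqP ->.
  by rewrite addNr.
case: (split_eq0 S) => [/(_ _ orthS)/eqP | /(_ _ orthC)/eqP].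
  by rewrite subr_eq0 => /eqP ->; left.
by rewrite addr_eq0 => /eqP ->; right; rewrite opprK.
Qed.

Lemma phaseless_injective_lin_indep F S : phaseless_injective F ->
  (M <= 2 * N - 1)%N -> #|S| = N -> lin_indep_on F S.
Proof.
move=> inj M_small cardS.
have [freeS | not_freeS] := boolP (row_free (subfamx F S)).
  exact: subfamx_row_free_lin_indep.
have rkS : (\rank (subfamx F S) < N)%N.
  by rewrite -[X in (_ < X)%N]cardS ltn_neqAle rank_leq_row andbT.
have rkC : (\rank (subfamx F (~: S)) < N)%N.
  apply: leq_ltn_trans (rank_leq_row _) _.
  have := cardsC S; rewrite card_ord cardS.
  have := leq_ltn_trans (leq0n _) rkS; lia.
have [u u_neq0 /(phaseless_injective_complement inj)] := subfamx_orthogonal rkS.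
have [v v_neq0 /[swap]/[apply]] := subfamx_orthogonal rkC.
by case=> /eqP; rewrite ?(negbTE u_neq0) ?(negbTE v_neq0).
Qed.

End Frames.

Section Vandermonde.
Variables (R : realType) (N M : nat).

Definition vandermonde_row (t : R) : 'rV[R]_N := \row_(j < N) t ^+ j.

Lemma dotv_vandermonde_row (u : 'rV[R]_N) t : dotv u (vandermonde_row t) = (rVpoly u).[t].
Proof. by rewrite horner_poly /dotv; apply: eq_bigr => j _; rewrite mxE valK. Qed.

Lemma vandermonde_orthogonal_eq0 (t : 'I_M -> R) (T : {set 'I_M}) u :
  {in T &, injective t} -> (N <= #|T|)%N ->
  orthogonal_on (vandermonde_row \o t) T u -> u = 0.
Proof.
move=> t_inj bigT orth_u.
suff rVpoly_eq0 : rVpoly u = 0.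
  by rewrite -[u]rVpolyK rVpoly_eq0; apply/rowP => j; rewrite !mxE coef0.
apply: contraTeq bigT => p_neq0; rewrite -ltnNge.
have t_uniq : uniq [seq t k | k <- enum T].
  by rewrite map_inj_in_uniq ?enum_uniq // => a b; rewrite !mem_enum; apply: t_inj.
have t_roots : all (root (rVpoly u)) [seq t k | k <- enum T].
  apply/allP => r /mapP[k]; rewrite mem_enum => kT ->.
  by rewrite /root -dotv_vandermonde_row orth_u.
have := max_poly_roots p_neq0 t_roots t_uniq.
by rewrite size_map -cardE => /leq_trans; apply; apply: size_poly.
Qed.

Hypotheses (N_ge2 : (2 <= N)%N) (M_ge2N : (2 * N <= M)%N).

Fact M_gt1 : (1 < M)%N. Proof. lia. Qed.

Definition i0 : 'I_M := Ordinal (ltnW M_gt1).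
Definition i1 : 'I_M := Ordinal M_gt1.

(* [k.-1] truncates at 0: [i0] and [i1] share the node 0, all other nodes are distinct. *)
Definition node (k : 'I_M) : R := (k.-1)%:R.

Definition node_frame (k : 'I_M) : 'rV[R]_N := vandermonde_row (node k).

Lemma node_inj : {in [set~ i1] &, injective node}.
Proof.
move=> [p p_lt] [q q_lt]; rewrite !inE -!(inj_eq val_inj) /= => p_neq1 q_neq1 /eqP.
by rewrite eqr_nat => /eqP /= pq; apply: val_inj => /=; lia.
Qed.

Lemma large_part_setD1 (S : {set 'I_M}) :
  (N <= #|S :\ i1|)%N \/ (N <= #|~: S :\ i1|)%N.
Proof.
have := cardsC S; rewrite (cardsD1 i1 S) (cardsD1 i1 (~: S)) card_ord in_setC.
set a := #|S :\ i1|; set b := #|~: S :\ i1|.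
by case: (i1 \in S) => /=; lia.
Qed.

Lemma node_frame_is_frame : is_frame node_frame.
Proof.
apply: orthogonal_eq0_is_frame => u orth_u.
apply: (vandermonde_orthogonal_eq0 node_inj) => [|k _]; last by apply: orth_u.
by rewrite cardsC1 card_ord; lia.
Qed.

Lemma node_frame_phaseless_injective : phaseless_injective node_frame.
Proof.
apply: complement_phaseless_injective => S.
have part_inj (T : {set 'I_M}) : {in T :\ i1 &, injective node}.
  by apply: sub_in2 node_inj => k; rewrite !inE => /andP[].
have [bigT | bigT] := large_part_setD1 S; [left | right] => u orth_u;
  apply: (vandermonde_orthogonal_eq0 (part_inj _) bigT) => k;
  by rewrite inE => /andP[_ /orth_u].
Qed.

Lemma node_frame_dependent : exists S : {set 'I_M}, #|S| = N /\ ~ lin_indep_on node_frame S.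
Proof.
have N_le_M : (N <= M)%N by lia.
exists [set widen_ord N_le_M i | i : 'I_N]; split.
  by rewrite card_imset ?card_ord // => a b /(congr1 val) ab; apply: val_inj.
have first_N (k : 'I_M) : (k < N)%N -> k \in [set widen_ord N_le_M i | i : 'I_N].
  by move=> k_lt_N; apply/imsetP; exists (Ordinal k_lt_N); last by apply: val_inj.
by apply: (repeated_not_lin_indep (i := i0) (j := i1)); rewrite ?first_N //=; lia.
Qed.

End Vandermonde.

Theorem corollary2p7 (R : realType) :
  (forall (N : nat) (F : 'I_(2 * N - 1) -> 'rV[R]_N),
     is_frame F -> phaseless_injective F ->
     forall S : {set 'I_(2 * N - 1)}, #|S| = N -> lin_indep_on F S)
  /\
  (forall N M : nat, (2 <= N)%N -> (2 * N <= M)%N ->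
     exists F : 'I_M -> 'rV[R]_N,
       [/\ is_frame F, phaseless_injective F &
           exists S : {set 'I_M}, #|S| = N /\ ~ lin_indep_on F S]).
Proof.
split=> [N F _ inj S | N M N_ge2 M_ge2N].
  exact: phaseless_injective_lin_indep.
exists (@node_frame R N M); split.
- exact: node_frame_is_frame.
- exact: node_frame_phaseless_injective.
- exact: node_frame_dependent.
Qed.
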